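(* Let $\mathbb{J}$ be a real symmetric $N\times N$ matrix with vanishing diagonal, and for $\boldsymbol\kappa\in\mathbb{R}^N$ put $\mathbb{J}(\boldsymbol\kappa)=\mathbb{J}+\operatorname{diag}(\kappa_1,\ldots,\kappa_N)$. (i) If $\mathbf{s}$ is a ground state of $\mathbb{J}$ and $\check{\boldsymbol\kappa}\in\mathbb{R}^N$ satisfies $\mathbb{J}(\check{\boldsymbol\kappa})\mathbf{s}=0$ (i.e. $\check{\boldsymbol\kappa}$ are Lagrange parameters of $\mathbf{s}$), then $\mathbb{J}(\check{\boldsymbol\kappa})\,G(\mathbf{s})=0$. (ii) Let $S\subseteq\mathbb{R}^N$ be a completely elliptic subspace such that $\mathcal{F}_S=\{G\in\mathcal{G}_N:\operatorname{range}G\subseteq S\}$ is a non-trivial closed face of $\mathcal{G}_N$, and let $S^\perp$ be the orthogonal complement of $S$. Then every positive semi-definite real symmetric $N\times N$ matrix $A$ with support (range) $S^\perp$ can be written as $A=\mathbb{J}'(\boldsymbol\kappa)$, where $\mathbb{J}'$ is the zero-diagonal matrix equal to $A$ off the diagonal and $\kappa_\mu=A_{\mu\mu}$, such that for every configuration $\mathbf{s}$ with $G(\mathbf{s})\in\mathcal{F}_S$, $\mathbf{s}$ is a ground state of $\mathbb{J}'$ with Lagrange parameters $\boldsymbol\kappa$, i.e. $\mathbb{J}'(\boldsymbol\kappa)\mathbf{s}=0$. (iii) Let $G_0$ be a boundary point of $\mathcal{G}_N$ (i.e. $\operatorname{rank}G_0<N$) and let $\mathcal{F}_0$ be the closed face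 of $\mathcal{G}_N$ generated by $G_0$. Then $\mathcal{F}_0=\{G\in\mathcal{G}_N:\operatorname{range}G\subseteq S\}$ for some completely elliptic subspace $S\subseteq\mathbb{R}^N$. Moreover, let $\mathcal{C}(G_0)$ be the convex cone of all linear functionals $\ell$ on the space $\mathcal{L}_N$ of real symmetric $N\times N$ matrices with vanishing diagonal such that $\ell(G-G_0)\ge0$ for all $G\in\mathcal{G}_N$. Then $A\mapsto f(A)$, $f(A)(X)=\operatorname{Tr}(AX)$ for $X\in\mathcal{L}_N$, is an affine bijection from the cone of positive semi-definite real symmetric $N\times N$ matrices $A$ with range contained in $S^\perp$ onto $\mathcal{C}(G_0)$.
   Context: $\mathcal{G}_N$ is the set of real symmetric positive semi-definite $N\times N$ matrices with all diagonal entries equal to $1$. For $M\ge1$, a spin configuration is a real $N\times M$ matrix $\mathbf{s}$ whose rows $\mathbf{s}_\mu$ are unit vectors of $\mathbb{R}^M$; its Gram matrix is $G(\mathbf{s})=\mathbf{s}\mathbf{s}^\top\in\mathcal{G}_N$. The Heisenberg energy is $H(\mathbf{s})=\sum_{\mu,\nu=1}^N J_{\mu\nu}\,\mathbf{s}_\mu\cdot\mathbf{s}_\nu=\operatorname{Tr}(\mathbb{J}G(\mathbf{s}))$. A ground state of $\mathbb{J}$ is a configuration $\mathbf{s}$ at which $H$ attains its global minimum (equivalently, $G(\mathbf{s})$ minimizes $G\mapsto\operatorname{Tr}(\mathbb{J}G)$ over $\mathcal{G}_N$). A subspace $S\subseteq\mathbb{R}^N$ of dimension $M$ is completely elliptic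 if there is an $N\times M$ matrix whose columns lie in $S$, whose rows are unit vectors and whose rank is $M$. A face of a convex set $C$ is a convex subset $F\subseteq C$ such that $x=\alpha y+(1-\alpha)z$ with $x\in F$, $y,z\in C$, $0<\alpha<1$ implies $y,z\in F$; the face generated by a point is the smallest face containing it; a face is non-trivial if it differs from $\emptyset$ and $\mathcal{G}_N$. *)

From HB Require Import structures.
From mathcomp Require Import all_boot all_order all_algebra.
From mathcomp Require Import all_classical all_reals topology normedtype.
Set Implicit Arguments. Unset Strict Implicit. Unset Printing Implicit Defensive.
Import Order.TTheory GRing.Theory Num.Theory.
Import numFieldNormedType.Exports.
Local Open Scope ring_scope.
Local Open Scope classical_set_scope.

Section Defs.
Variable R : realType.

Definition h_symmetric_mx (N : nat) (A : 'M[R]_N) : Prop := A^T = A.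

Definition h_psd (N : nat) (A : 'M[R]_N) : Prop :=
  h_symmetric_mx A /\ forall v : 'rV[R]_N, 0 <= (v *m A *m v^T) 0 0.

Definition h_zero_diag_sym (N : nat) (X : 'M[R]_N) : Prop :=
  h_symmetric_mx X /\ forall i, X i i = 0.

Definition h_GN (N : nat) : set 'M[R]_N :=
  [set G | h_psd G /\ forall i, G i i = 1].

Definition h_configuration (N M : nat) (s : 'M[R]_(N, M)) : Prop :=
  forall i, \sum_(j < M) s i j ^+ 2 = 1.

Definition h_gram (N M : nat) (s : 'M[R]_(N, M)) : 'M[R]_N := s *m s^T.

Definition h_energy (N M : nat) (J : 'M[R]_N) (s : 'M[R]_(N, M)) : R :=
  \tr (J *m h_gram s).

Definition h_ground_state (N M : nat) (J : 'M[R]_N) (s : 'M[R]_(N, M)) : Prop :=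
  h_configuration s /\
  forall (M' : nat) (s' : 'M[R]_(N, M')), h_configuration s' ->
    h_energy J s <= h_energy J s'.

Definition h_Jk (N : nat) (J : 'M[R]_N) (k : 'rV[R]_N) : 'M[R]_N :=
  J + diag_mx k.

Definition h_lagrange (N M : nat) (J : 'M[R]_N) (k : 'rV[R]_N)
  (s : 'M[R]_(N, M)) : Prop := h_Jk J k *m s = 0.

(* A subspace S of R^N is represented by a matrix whose row space is S. *)
Definition h_completely_elliptic (N : nat) (S : 'M[R]_N) : Prop :=
  exists X : 'M[R]_(N, \rank S),
    (X^T <= S)%MS /\ (forall i, \sum_(j < \rank S) X i j ^+ 2 = 1) /\
    \rank X = \rank S.

Definition h_orthC (N : nat) (S : 'M[R]_N) : 'M[R]_N := kermx S^T.

(* F_S = { G in G_N : range G subset S } ; G symmetric so its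
   row space equals its range *)
Definition h_FS (N : nat) (S : 'M[R]_N) : set 'M[R]_N :=
  [set G | @h_GN N G /\ (G <= S)%MS].

Definition h_convex_set (N : nat) (C : set 'M[R]_N) : Prop :=
  forall x y a, C x -> C y -> 0 <= a <= 1 -> C (a *: x + (1 - a) *: y).

Definition h_is_face (N : nat) (C F : set 'M[R]_N) : Prop :=
  F `<=` C /\ h_convex_set F /\
  forall x y z a, F x -> C y -> C z -> 0 < a < 1 ->
    x = a *: y + (1 - a) *: z -> F y /\ F z.

Definition h_nontrivial_face (N : nat) (C F : set 'M[R]_N) : Prop :=
  h_is_face C F /\ F <> set0 /\ F <> C.

Definition h_face_generated (N : nat) (C : set 'M[R]_N) (x : 'M[R]_N)
  (F : set 'M[R]_N) : Prop :=
  h_is_face C F /\ F x /\ forall F', h_is_face C F' -> F' x -> F `<=` F'.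

Definition h_offdiag (N : nat) (A : 'M[R]_N) : 'M[R]_N :=
  \matrix_(i, j) (if i == j then 0 else A i j).
Definition h_diag_of (N : nat) (A : 'M[R]_N) : 'rV[R]_N := \row_i A i i.

(* linear functionals on L_N, represented by functions on all matrices
   whose values only matter on L_N *)
Definition h_linear_on_LN (N : nat) (l : 'M[R]_N -> R) : Prop :=
  forall (a : R) X Y, h_zero_diag_sym X -> h_zero_diag_sym Y ->
    l (a *: X + Y) = a * l X + l Y.

Definition h_coneC (N : nat) (G0 : 'M[R]_N) (l : 'M[R]_N -> R) : Prop :=
  h_linear_on_LN l /\ forall G, @h_GN N G -> 0 <= l (G - G0).

Definition h_fA (N : nat) (A : 'M[R]_N) : 'M[R]_N -> R := fun X => \tr (A *m X).

End Defs.

(* If A is positive semi-definite and its range is orthogonal to S, then A s = 0 for every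
   configuration s with range G(s) in S, so A = J'(kappa) annihilates s, and
   H_J'(s) = Tr(A G(s)) - Tr A attains its lower bound -Tr A; this gives (ii), and (i) is
   immediate from J(kappa) s = 0.  For (iii) take S = range G0.  F_S is a face containing
   G0, so it contains F0; conversely every G in G_N with range G in range G0 is dominated by
   a multiple of G0, so G0 is a proper convex combination of G and another point of G_N,
   whence G lies in F0.  A functional l in C(G0) is X |-> Tr(B X) for a symmetric B read off
   from l on the matrices E_ij + E_ji; changing the diagonal of B so that A G0 has zero
   diagonal does not change l on L_N, and testing l along the curve D_t G0 D_t + t w^T w in
   G_N, with D_t = diag(sqrt(1 - t w_i^2)), gives w A w^T >= 0 to first order in t.  Then
   Tr(A G0) = 0 forces A G0 = 0, i.e. range A is orthogonal to S; and A G0 = 0 also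
   determines the diagonal of A from its off-diagonal part, which gives injectivity.  All of
   this rests on writing a positive semi-definite matrix as X X^T with X^T of full row rank. *)

From HB Require Import structures.
From mathcomp Require Import all_boot all_order all_algebra.
From mathcomp Require Import all_classical all_reals topology normedtype.
From mathcomp Require Import ring lra.
Import Order.TTheory GRing.Theory Num.Theory.
Import numFieldNormedType.Exports.
Local Open Scope ring_scope.
Local Open Scope classical_set_scope.
Set Implicit Arguments. Unset Strict Implicit. Unset Printing Implicit Defensive.

Section RealInequalities.
Variable R : realFieldType.

Lemma quadratic_ge0_lin_eq0 (p q : R) :
  0 <= q -> (forall t, 0 <= 2 * t * p + t ^+ 2 * q) -> p = 0.
Proof.
move=> q_ge0 nonneg; have q1_neq0 : q + 1 != 0 by rewrite gt_eqF //; lra.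
have := nonneg (- p / (q + 1)); set t := - p / (q + 1).
have tq : t * (q + 1) = - p by rewrite /t divfK.
move=> ge0; clearbody t.
have : 0 <= (2 * t * p + t ^+ 2 * q) * (q + 1) ^+ 2 by apply: mulr_ge0 => //; nra.
have -> : (2 * t * p + t ^+ 2 * q) * (q + 1) ^+ 2 =
          2 * (t * (q + 1)) * p * (q + 1) + (t * (q + 1)) ^+ 2 * q by ring.
rewrite tq; nra.
Qed.

Lemma affine_ge0_slope_eq0 (p q : R) : (forall t, 0 <= 2 * t * p + q) -> p = 0.
Proof.
move=> nonneg; apply/eqP/negP => /negP p_neq0.
have := nonneg (- (q + 1) / (2 * p)).
have -> : 2 * (- (q + 1) / (2 * p)) * p = - (q + 1) by field.
lra.
Qed.

Lemma near0_quadratic_ge0_lin_ge0 (q c e : R) : 0 <= c -> 0 < e ->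
  (forall t, 0 < t -> t <= e -> 0 <= t * q + c * t ^+ 2) -> 0 <= q.
Proof.
move=> c_ge0 e_gt0 nonneg; rewrite leNgt; apply/negP => q_lt0.
pose t := Num.min e (- q / (c + 1)).
have c1_gt0 : 0 < c + 1 by lra.
have t_gt0 : 0 < t by rewrite lt_min e_gt0 divr_gt0 //; lra.
have t_le_e : t <= e by rewrite ge_min lexx.
have tc : t * (c + 1) <= - q by rewrite -ler_pdivlMr // ge_min lexx orbT.
have := nonneg t t_gt0 t_le_e; nra.
Qed.

End RealInequalities.

Lemma sqrt1B_dist (R : rcfType) (u : R) :
  0 <= u <= 1 -> `|Num.sqrt (1 - u) - 1| <= u.
Proof.
move=> /andP[u_ge0 u_le1].
have := sqrtr_ge0 (1 - u); have : Num.sqrt (1 - u) ^+ 2 = 1 - u by rewrite sqr_sqrtr; lra.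
move: (Num.sqrt (1 - u)) => s s2 s_ge0.
have s_le1 : s <= 1 by nra.
have : 1 - u <= s by nra.
rewrite ler0_norm; lra.
Qed.

Section QuadraticForms.
Variable R : realFieldType.
Implicit Types n : nat.

Definition qform n (A : 'M[R]_n) (v : 'rV[R]_n) : R := (v *m A *m v^T) 0 0.

Lemma qformDZ n (A : 'M[R]_n) (u v : 'rV[R]_n) (t : R) : A^T = A ->
  qform A (v + t *: u) = qform A v + 2 * t * (v *m A *m u^T) 0 0 + t ^+ 2 * qform A u.
Proof.
move=> sA; have uv : (u *m A *m v^T) 0 0 = (v *m A *m u^T) 0 0.
  have tr11 (M : 'M[R]_1) : M 0 0 = M^T 0 0 by rewrite mxE.
  by rewrite tr11 !trmx_mul trmxK sA mulmxA.
rewrite /qform linearD /= linearZ /= !mulmxDl !mulmxDr -!scalemxAl -!scalemxAr.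
move: uv; move: (v *m A *m v^T) (v *m A *m u^T) (u *m A *m v^T) (u *m A *m u^T).
by move=> a b c d uv; rewrite !mxE uv; ring.
Qed.

Lemma qformD n (x y : 'M[R]_n) (a b : R) (v : 'rV[R]_n) :
  qform (a *: x + b *: y) v = a * qform x v + b * qform y v.
Proof. by rewrite /qform mulmxDr mulmxDl -!scalemxAr -!scalemxAl !mxE. Qed.

Lemma gram_diag_ge0 m n (M : 'M[R]_(m, n)) i : 0 <= (M *m M^T) i i.
Proof. by rewrite mxE; apply: sumr_ge0 => j _; rewrite mxE -expr2 sqr_ge0. Qed.

Lemma sqr_le_dot_self n (u : 'rV[R]_n) i : u 0 i ^+ 2 <= (u *m u^T) 0 0.
Proof.
rewrite mxE (bigD1 i) //= mxE -expr2 lerDl.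
by apply: sumr_ge0 => k _; rewrite mxE -expr2 sqr_ge0.
Qed.

Lemma dot_self_eq0 n (u : 'rV[R]_n) : (u *m u^T) 0 0 = 0 -> u = 0.
Proof.
rewrite mxE => sum0; apply/rowP => j; rewrite mxE.
have sq_ge0 i : predT i -> 0 <= u 0 i * u^T i 0 by rewrite mxE -expr2 sqr_ge0.
have /eqP := @psumr_eq0P _ _ predT _ sq_ge0 sum0 j isT.
by rewrite mxE mulf_eq0 orbb => /eqP.
Qed.

Lemma gram_eq0 m n (M : 'M[R]_(m, n)) : M *m M^T = 0 -> M = 0.
Proof.
move=> MM0; apply/row_matrixP => i; rewrite row0; apply: dot_self_eq0.
have -> : (row i M *m (row i M)^T) 0 0 = (M *m M^T) i i.
  by rewrite !mxE; apply: eq_bigr => j _; rewrite !mxE.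
by rewrite MM0 mxE.
Qed.

Lemma qform_le_sum_norm n (A : 'M[R]_n) (u : 'rV[R]_n) :
  qform A u <= (\sum_i \sum_j `|A i j|) * (u *m u^T) 0 0.
Proof.
set S := (u *m u^T) 0 0.
have entry i j : u 0 i * A i j * u 0 j <= `|A i j| * S.
  apply: le_trans (ler_norm _) _; rewrite !normrM.
  have := sqr_le_dot_self u i; have := sqr_le_dot_self u j.
  rewrite -(real_normK (num_real (u 0 i))) -(real_normK (num_real (u 0 j))) -/S.
  have := normr_ge0 (u 0 i); have := normr_ge0 (u 0 j); have := normr_ge0 (A i j).
  move: `|u 0 i| `|u 0 j| `|A i j| => a b c c_ge0 b_ge0 a_ge0 b2 a2.
  have : a * b <= S by nra.
  nra.
have -> : qform A u = \sum_i \sum_j u 0 i * A i j * u 0 j.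
  rewrite /qform mxE; under eq_bigr do rewrite mxE mulr_suml.
  by rewrite exchange_big; apply: eq_bigr => i _; apply: eq_bigr => j _; rewrite !mxE.
rewrite mulr_suml; apply: ler_sum => i _; rewrite mulr_suml.
by apply: ler_sum => j _; exact: entry.
Qed.

Lemma tr_mul_gram n r (A : 'M[R]_n) (X : 'M[R]_(n, r)) :
  \tr (A *m (X *m X^T)) = \sum_k qform A (row k X^T).
Proof.
rewrite mulmxA mxtrace_mulC mulmxA /mxtrace; apply: eq_bigr => k _.
rewrite /qform !mxE; apply: eq_bigr => j _; rewrite !mxE; congr (_ * _).
by apply: eq_bigr => i _; rewrite !mxE.
Qed.

End QuadraticForms.

Section PositiveSemidefinite.
Variable R : realType.
Implicit Types n : nat.

Lemma psd_qform_eq0 n (A : 'M[R]_n) v : h_psd A -> qform A v = 0 -> v *m A = 0.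
Proof.
case=> sA A_ge0 Av0; apply: dot_self_eq0.
apply: (@quadratic_ge0_lin_eq0 _ _ (qform A (v *m A))); first exact: A_ge0.
by move=> t; have := A_ge0 (v + t *: (v *m A)); rewrite -/(qform _ _) qformDZ // Av0 add0r.
Qed.

Lemma psd_combination n (x y : 'M[R]_n) a b : 0 <= a -> 0 <= b ->
  h_psd x -> h_psd y -> h_psd (a *: x + b *: y).
Proof.
move=> a_ge0 b_ge0 [sx x_ge0] [sy y_ge0]; split.
  by rewrite /h_symmetric_mx linearD /= !linearZ /= sx sy.
move=> v; rewrite -/(qform _ v) qformD.
by apply: addr_ge0; apply: mulr_ge0; rewrite //=; [exact: x_ge0 | exact: y_ge0].
Qed.

Lemma psd_tr_gram_ge0 n r (A : 'M[R]_n) (X : 'M[R]_(n, r)) :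
  h_psd A -> 0 <= \tr (A *m (X *m X^T)).
Proof. by case=> _ A_ge0; rewrite tr_mul_gram; apply: sumr_ge0 => k _; exact: A_ge0. Qed.

Lemma psd_tr_gram_eq0 n r (A : 'M[R]_n) (X : 'M[R]_(n, r)) :
  h_psd A -> \tr (A *m (X *m X^T)) = 0 -> A *m X = 0.
Proof.
move=> psdA; rewrite tr_mul_gram => tr0.
apply: trmx_inj; rewrite trmx_mul psdA.1 trmx0; apply/row_matrixP => k.
rewrite row_mul row0; apply: psd_qform_eq0 => //.
exact: (@psumr_eq0P _ _ predT _ (fun i _ => psdA.2 (row i X^T)) tr0 k isT).
Qed.

End PositiveSemidefinite.

Section GramFactorization.
Variable R : realType.
Implicit Types n r : nat.

Lemma sym_block_mx n (G : 'M[R]_(1 + n)) : G^T = G ->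
  G = block_mx (ulsubmx G) (dlsubmx G)^T (dlsubmx G) (drsubmx G).
Proof. by move=> sG; rewrite trmx_dlsub sG submxK. Qed.

Lemma qform_block n (a : 'M[R]_1) (b : 'M[R]_(n, 1)) (c : 'M[R]_n) (x : 'M[R]_1) v :
  qform (block_mx a b^T b c) (row_mx x v) =
  x 0 0 ^+ 2 * a 0 0 + 2 * x 0 0 * (v *m b) 0 0 + qform c v.
Proof.
rewrite /qform tr_row_mx mul_row_block mul_row_col !mulmxDl.
rewrite [x]mx11_scalar [a]mx11_scalar tr_scalar_mx !mul_scalar_mx !mul_mx_scalar.
rewrite -!scalemxAl !mxE eqxx !mulr1n.
have -> : \sum_j b^T 0 j * v^T j 0 = \sum_j v 0 j * b j 0.
  by apply: eq_bigr => j _; rewrite !mxE mulrC.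
ring.
Qed.

Lemma psd_block_drsub n (a : 'M[R]_1) (b : 'M[R]_(n, 1)) (c : 'M[R]_n) :
  h_psd (block_mx a b^T b c) -> c^T = c.
Proof. by case=> sG _; rewrite -[c](block_mxKdr a b^T b) trmx_drsub sG. Qed.

Lemma psd_schur_complement n (a : 'M[R]_1) (b : 'M[R]_(n, 1)) (c : 'M[R]_n) :
  h_psd (block_mx a b^T b c) -> 0 < a 0 0 ->
  h_psd (c - (a 0 0)^-1 *: (b *m b^T)).
Proof.
move=> psdG a_gt0; have sc := psd_block_drsub psdG; split.
  by rewrite /h_symmetric_mx linearB /= linearZ /= trmx_mul trmxK sc.
move=> v; have := psdG.2 (row_mx (- (v *m b) 0 0 / a 0 0)%:M v).
rewrite -/(qform _ _) qform_block mxE eqxx mulr1n.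
have -> : (v *m (c - (a 0 0)^-1 *: (b *m b^T)) *m v^T) 0 0 =
          qform c v - (a 0 0)^-1 * (v *m b) 0 0 ^+ 2.
  rewrite /qform mulmxBr mulmxBl -scalemxAr -scalemxAl.
  have -> : v *m (b *m b^T) *m v^T = (v *m b) *m (v *m b)^T by rewrite trmx_mul !mulmxA.
  by rewrite !mxE big_ord1 !mxE expr2.
move: (qform c v) ((v *m b) 0 0) => q p.
have a_neq0 : a 0 0 != 0 by rewrite gt_eqF.
suff -> : (- p / a 0 0) ^+ 2 * a 0 0 + 2 * (- p / a 0 0) * p + q =
          q - (a 0 0)^-1 * p ^+ 2 by [].
by field.
Qed.

Lemma psd_zero_pivot n (a : 'M[R]_1) (b : 'M[R]_(n, 1)) (c : 'M[R]_n) :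
  h_psd (block_mx a b^T b c) -> a 0 0 = 0 -> b = 0 /\ h_psd c.
Proof.
move=> psdG a0; have sc := psd_block_drsub psdG.
have form x v : 0 <= 2 * x * (v *m b) 0 0 + qform c v.
  by have := psdG.2 (row_mx x%:M v); rewrite -/(qform _ _) qform_block a0 mxE eqxx mulr1n; lra.
split; last by split=> // v; have := form 0 v; rewrite mulr0 mul0r add0r.
have vb0 (v : 'rV_n) : (v *m b) 0 0 = 0 by apply: affine_ge0_slope_eq0 (form^~ v).
apply: trmx_inj; rewrite trmx0; apply: dot_self_eq0; by rewrite trmxK vb0.
Qed.

Lemma gram_block_lower n r (s : R) (b : 'M[R]_(n, 1)) (Y : 'M[R]_(n, r)) :
  s != 0 ->
  let X := block_mx (s%:M : 'M_1) 0 (s^-1 *: b) Y in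
  X *m X^T = block_mx (s ^+ 2)%:M b^T b (s ^- 2 *: (b *m b^T) + Y *m Y^T).
Proof.
move=> s_neq0 /=; rewrite tr_block_mx mulmx_block !trmx0 !mulmx0 !addr0 tr_scalar_mx.
rewrite mul0mx addr0 -scalar_mxM -expr2 linearZ /= mul_scalar_mx mul_mx_scalar.
by rewrite -scalemxAl -scalemxAr !scalerA mulfV // !scale1r -expr2 exprVn.
Qed.

Lemma row_free_block_lower n r (s : R) (b : 'M[R]_(n, 1)) (Y : 'M[R]_(n, r)) :
  s != 0 -> row_free Y^T -> row_free (block_mx (s%:M : 'M_1) 0 (s^-1 *: b) Y)^T.
Proof.
move=> s_neq0 freeY; rewrite tr_block_mx; apply: inj_row_free => v.
rewrite -[v]hsubmxK mul_row_block !trmx0 !mulmx0 !addr0 tr_scalar_mx mul_mx_scalar.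
move=> /eqP; rewrite row_mx_eq0 scaler_eq0 (negbTE s_neq0) /= => /andP[/eqP-> /eqP].
by rewrite mul0mx add0r -(mul0mx _ Y^T) => /(row_free_inj freeY)->; rewrite row_mx0.
Qed.

Lemma psd_gram_factor n (G : 'M[R]_n) : h_psd G ->
  exists r (X : 'M[R]_(n, r)), G = X *m X^T /\ row_free X^T.
Proof.
elim: n G => [|n IH] G psdG.
  by exists 0%N, 0; rewrite [G]flatmx0 [_ *m _]flatmx0 /row_free trmx0 mxrank0.
move: G psdG; change n.+1 with (1 + n)%N => G psdG.
have := sym_block_mx psdG.1.
set a := ulsubmx _; set b := dlsubmx _; set c := drsubmx _ => Gblk.
rewrite {}Gblk in psdG *.
have : 0 <= a 0 0.
  have := psdG.2 (row_mx 1%:M 0); rewrite -/(qform _ _) qform_block /qform.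
  by rewrite !mul0mx !mxE eqxx mulr1n; lra.
rewrite le_eqVlt => /orP[/eqP/esym a0 | a_gt0].
  have [-> psdc] := psd_zero_pivot psdG a0.
  have [r [Y [-> freeY]]] := IH c psdc.
  exists r, (col_mx (0 : 'M_(1, r)) Y); split.
    by rewrite tr_col_mx mul_col_row !trmx0 !mul0mx mulmx0 [a]mx11_scalar a0 raddf0.
  by rewrite /row_free mxrank_tr rank_col_0mx -mxrank_tr.
have [r [Y [eY freeY]]] := IH _ (psd_schur_complement psdG a_gt0).
have s_neq0 : Num.sqrt (a 0 0) != 0 by rewrite gt_eqF // sqrtr_gt0.
exists (1 + r)%N, (block_mx (Num.sqrt (a 0 0))%:M 0 ((Num.sqrt (a 0 0))^-1 *: b) Y).
split; last exact: row_free_block_lower.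
by rewrite gram_block_lower // -eY sqr_sqrtr ?ltW // addrC subrK -mx11_scalar.
Qed.

End GramFactorization.

Lemma submx_ker_trmx (F : fieldType) m n p (A : 'M[F]_(m, n)) (B : 'M[F]_(p, n)) :
  (forall v : 'rV_n, v *m A^T = 0 -> v *m B^T = 0) -> (B <= A)%MS.
Proof.
move=> kerAB; rewrite submxE -trmx_eq0 trmx_mul; apply/eqP/row_matrixP => i.
rewrite row_mul row0; apply: kerAB.
by rewrite -row_mul -trmx_mul mulmx_coker trmx0 row0.
Qed.

Lemma mxrank_gram (R : realFieldType) n r (X : 'M[R]_(n, r)) : \rank (X *m X^T) = \rank X.
Proof.
apply/eqP; rewrite eqn_leq mxrankM_maxl -mxrank_tr mxrankS //.
apply: submx_ker_trmx => v; rewrite trmx_mul trmxK mulmxA => vXX0.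
by apply: dot_self_eq0; rewrite trmx_mul mulmxA vXX0 mul0mx mxE.
Qed.

Lemma psd_gram_factor_rank (R : realType) n (G : 'M[R]_n) : h_psd G ->
  exists X : 'M[R]_(n, \rank G), G = X *m X^T /\ row_free X^T.
Proof.
move=> /psd_gram_factor[r [X [eG freeX]]].
by rewrite eG mxrank_gram -mxrank_tr (eqP freeX) -eG; exists X.
Qed.

Section Faces.
Variable R : realType.
Implicit Types n : nat.

Lemma GN_convex n : h_convex_set (@h_GN R n).
Proof.
move=> x y a [psdx dx] [psdy dy] /andP[a_ge0 a_le1]; split.
  by apply: psd_combination => //; rewrite subr_ge0.
by move=> i; rewrite !mxE dx dy !mulr1 addrC subrK.
Qed.

Lemma psd_combination_submx n (S y z : 'M[R]_n) a b : 0 < a -> 0 <= b ->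
  h_psd y -> h_psd z -> ((a *: y + b *: z)%R <= S)%MS -> (y <= S)%MS.
Proof.
move=> a_gt0 b_ge0 psdy psdz /submxP[D eD]; apply: submx_ker_trmx => v vS.
have sx := (psd_combination (ltW a_gt0) b_ge0 psdy psdz).1.
have : qform (a *: y + b *: z) v = 0.
  by rewrite /qform -sx eD trmx_mul mulmxA vS !mul0mx mxE.
rewrite qformD => qf0.
have qy0 : qform y v = 0.
  by have := psdy.2 v; have := psdz.2 v; rewrite -/(qform y v) -/(qform z v); nra.
by rewrite psdy.1; exact: psd_qform_eq0.
Qed.

Lemma FS_face n (S : 'M[R]_n) : h_is_face (@h_GN R n) (h_FS S).
Proof.
split; first by move=> x [].
split.
  move=> x y a [GNx xS] [GNy yS] a01; split; first exact: GN_convex.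
  by rewrite addmx_sub // scalemx_sub.
move=> x y z a [_ xS] [psdy dy] [psdz dz] /andP[a_gt0 a_lt1] ex.
rewrite ex in xS; have b_gt0 : 0 < 1 - a by lra.
split; split; try by split.
  exact: psd_combination_submx a_gt0 (ltW b_gt0) psdy psdz xS.
by apply: psd_combination_submx b_gt0 (ltW a_gt0) psdz psdy _; rewrite addrC.
Qed.

Lemma psd_dominated n (G0 G : 'M[R]_n) : h_psd G0 -> h_symmetric_mx G ->
  (G <= G0)%MS -> exists2 lam : R, 0 <= lam & forall v, qform G v <= lam * qform G0 v.
Proof.
move=> /psd_gram_factor[r [X [eG0 freeX]]] sG GG0.
have [E eE] : exists E, G = E *m X^T.
  by apply/submxP; apply: submx_trans GG0 _; rewrite eG0 submxMl.
have [B XB] := row_freeP freeX.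
have BX : B^T *m X = 1%:M by rewrite -[X]trmxK -trmx_mul XB trmx1.
have eG : G = X *m (B^T *m E) *m X^T.
  have GT : G = X *m E^T by rewrite -sG eE trmx_mul trmxK.
  by rewrite -!mulmxA -eE {2}GT !mulmxA -(mulmxA X) BX mulmx1 -GT.
exists (\sum_i \sum_j `|(B^T *m E) i j|); first by do 2!(apply: sumr_ge0 => ? _).
move=> v; rewrite /qform eG eG0.
have -> : v *m (X *m (B^T *m E) *m X^T) *m v^T = (v *m X) *m (B^T *m E) *m (v *m X)^T.
  by rewrite trmx_mul !mulmxA.
have -> : v *m (X *m X^T) *m v^T = (v *m X) *m (v *m X)^T by rewrite trmx_mul !mulmxA.
exact: qform_le_sum_norm.
Qed.

Lemma GN_dominated_decomp n (G0 G : 'M[R]_n) : h_GN G0 -> h_GN G -> (G <= G0)%MS ->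
  exists a Z, [/\ 0 < a < 1, h_GN Z & G0 = a *: G + (1 - a) *: Z].
Proof.
move=> [psd0 d0] [psdG dG] GG0.
have [lam lam_ge0 dom] := psd_dominated psd0 psdG.1 GG0.
(* [a < 1] even when [lam = 0], and [a * lam <= 1] keeps [G0 - a *: G] semi-definite. *)
pose a := (lam + 2)^-1.
have a_gt0 : 0 < a by rewrite invr_gt0; lra.
have a_lt1 : a < 1 by rewrite invf_lt1; lra.
have a_lam : a * lam <= 1 by rewrite mulrC ler_pdivrMr; lra.
have b_neq0 : 1 - a != 0 by rewrite subr_eq0 gt_eqF.
clearbody a.
pose Z := (1 - a)^-1 *: G0 + (- (a / (1 - a))) *: G.
exists a, Z; split; first by rewrite a_gt0 a_lt1.
- split; first split.
  + by rewrite /h_symmetric_mx /Z linearD /= !linearZ /= psd0.1 psdG.1.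
  + move=> v; rewrite -/(qform _ v) qformD.
    rewrite (_ : _ + _ = (qform G0 v - a * qform G v) / (1 - a)); last by field.
    have := dom v; have := psd0.2 v; have := psdG.2 v.
    rewrite -/(qform _ v) -/(qform _ v) => qG qG0 qGG0.
    by apply: divr_ge0; nra.
  + by move=> i; rewrite !mxE d0 dG !mulr1; field.
- by apply/matrixP => i j; rewrite !mxE; field.
Qed.

Lemma face_generated_FS n (G0 : 'M[R]_n) F0 : h_GN G0 ->
  h_face_generated (@h_GN R n) G0 F0 -> F0 = h_FS G0.
Proof.
move=> GN0 [faceF0 [F0G0 minF0]]; apply/seteqP; split.
  by apply: minF0; [exact: FS_face | split=> //; exact: submx_refl].
move=> G [GNG GG0]; have [a [Z [a01 GNZ eG0]]] := GN_dominated_decomp GN0 GNG GG0.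
by have [] := faceF0.2.2 G0 G Z a F0G0 GNG GNZ a01 eG0.
Qed.

End Faces.

Section ZeroDiagonalSymmetric.
Variable R : realType.
Variable n : nat.
Implicit Types (X Y : 'M[R]_n) (l : 'M[R]_n -> R).

Lemma zero_diag_sym0 : h_zero_diag_sym (0 : 'M[R]_n).
Proof. by split=> [|i]; rewrite ?mxE // /h_symmetric_mx trmx0. Qed.

Lemma zero_diag_symD X Y :
  h_zero_diag_sym X -> h_zero_diag_sym Y -> h_zero_diag_sym (X + Y).
Proof.
move=> [sX dX] [sY dY]; split=> [|i]; last by rewrite mxE dX dY addr0.
by rewrite /h_symmetric_mx linearD /= sX sY.
Qed.

Lemma zero_diag_symZ a X : h_zero_diag_sym X -> h_zero_diag_sym (a *: X).
Proof.
move=> [sX dX]; split=> [|i]; last by rewrite mxE dX mulr0.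
by rewrite /h_symmetric_mx linearZ /= sX.
Qed.

Lemma zero_diag_sym_delta i j : i != j ->
  h_zero_diag_sym (delta_mx i j + delta_mx j i : 'M[R]_n).
Proof.
move=> neq_ij; split=> [|k]; first by rewrite /h_symmetric_mx linearD /= !trmx_delta addrC.
rewrite !mxE; case: (eqVneq k i) => [->|_]; first rewrite (negbTE neq_ij).
all: by rewrite ?andbF /= mulr0n addr0.
Qed.

Lemma GN_subr_zero_diag_sym (G G0 : 'M[R]_n) :
  h_GN G -> h_GN G0 -> h_zero_diag_sym (G - G0).
Proof.
move=> [[sG _] dG] [[sG0 _] dG0]; split=> [|i]; last by rewrite !mxE dG dG0 subrr.
by rewrite /h_symmetric_mx linearB /= sG sG0.
Qed.

Lemma linear_on_LN0 l : h_linear_on_LN l -> l 0 = 0.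
Proof.
move=> lin_l; have := lin_l 1 0 0 zero_diag_sym0 zero_diag_sym0.
by rewrite scaler0 addr0 mul1r; lra.
Qed.

Lemma linear_on_LND l X Y : h_linear_on_LN l ->
  h_zero_diag_sym X -> h_zero_diag_sym Y -> l (X + Y) = l X + l Y.
Proof. by move=> lin_l LX LY; have := lin_l 1 X Y LX LY; rewrite scale1r mul1r. Qed.

Lemma linear_on_LNZ l a X : h_linear_on_LN l -> h_zero_diag_sym X -> l (a *: X) = a * l X.
Proof.
move=> lin_l LX; have := lin_l a X 0 LX zero_diag_sym0.
by rewrite !addr0 linear_on_LN0 // addr0.
Qed.

Lemma linear_on_LN_sum l (I : finType) (F : I -> 'M[R]_n) : h_linear_on_LN l ->
  (forall i, h_zero_diag_sym (F i)) ->
  h_zero_diag_sym (\sum_i F i) /\ l (\sum_i F i) = \sum_i l (F i).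
Proof.
move=> lin_l LF; apply: (big_rec2 (fun Y y => h_zero_diag_sym Y /\ l Y = y)).
  by split; [exact: zero_diag_sym0 | exact: linear_on_LN0].
by move=> i Y y _ [LY <-]; split; [exact: zero_diag_symD | exact: linear_on_LND].
Qed.

Lemma sym_sum_delta X : X^T = X ->
  X = \sum_i \sum_j (X i j / 2) *: (delta_mx i j + delta_mx j i).
Proof.
move=> sX; have half Y : \sum_i \sum_j (Y i j / 2) *: delta_mx i j = 2^-1 *: Y.
  rewrite [in RHS](matrix_sum_delta Y) scaler_sumr; apply: eq_bigr => i _.
  by rewrite scaler_sumr; apply: eq_bigr => j _; rewrite scalerA mulrC.
have halfT : \sum_i \sum_j (X i j / 2) *: delta_mx j i = 2^-1 *: X.
  rewrite exchange_big /= -{2}sX -half; apply: eq_bigr => i _; apply: eq_bigr => j _.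
  by rewrite mxE.
under eq_bigr do under eq_bigr do rewrite scalerDr.
under eq_bigr do rewrite big_split /=.
by rewrite big_split /= half halfT -scalerDl (_ : 2^-1 + 2^-1 = 1) ?scale1r //; field.
Qed.

(* Halved because [sym_sum_delta] meets every off-diagonal pair twice. *)
Definition functional_mx l : 'M[R]_n :=
  \matrix_(i, j) (if i == j then 0 else l (delta_mx i j + delta_mx j i) / 2).

Lemma linear_on_LN_tr l X : h_linear_on_LN l -> h_zero_diag_sym X ->
  l X = \tr (functional_mx l *m X).
Proof.
move=> lin_l [sX dX].
pose T i j := (X i j / 2) *: (delta_mx i j + delta_mx j i : 'M[R]_n).
have LT i j : h_zero_diag_sym (T i j).
  rewrite /T; case: (eqVneq i j) => [<-|neq_ij]; last exact/zero_diag_symZ/zero_diag_sym_delta.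
  by rewrite dX mul0r scale0r; exact: zero_diag_sym0.
have LTi i := linear_on_LN_sum lin_l (LT i).
rewrite {1}(sym_sum_delta sX) -/T.
have [_ ->] := linear_on_LN_sum lin_l (fun i => (LTi i).1).
apply: eq_bigr => i _; rewrite (LTi i).2 mxE; apply: eq_bigr => j _; rewrite /T !mxE.
case: (eqVneq i j) => [<-|neq_ij]; first by rewrite dX mul0r scale0r linear_on_LN0 // mul0r.
rewrite linear_on_LNZ //; last exact: zero_diag_sym_delta.
have -> : X j i = X i j by rewrite -{1}sX mxE.
ring.
Qed.

End ZeroDiagonalSymmetric.

Section TangentCone.
Variable R : realType.
Variable n : nat.
Implicit Types (A G : 'M[R]_n) (w d : 'rV[R]_n).

Lemma psd_gram m (X : 'M[R]_(n, m)) : h_psd (X *m X^T).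
Proof.
split=> [|v]; first by rewrite /h_symmetric_mx trmx_mul trmxK.
have -> : v *m (X *m X^T) *m v^T = (v *m X) *m (v *m X)^T by rewrite trmx_mul !mulmxA.
exact: gram_diag_ge0.
Qed.

Lemma psd_diag_conj d G : h_psd G -> h_psd (diag_mx d *m G *m diag_mx d).
Proof.
move=> [sG G_ge0]; split=> [|v].
  by rewrite /h_symmetric_mx !trmx_mul tr_diag_mx sG mulmxA.
have -> : v *m (diag_mx d *m G *m diag_mx d) *m v^T =
          (v *m diag_mx d) *m G *m (v *m diag_mx d)^T by rewrite trmx_mul tr_diag_mx !mulmxA.
exact: G_ge0.
Qed.

Definition shrink (t : R) w : 'rV[R]_n := \row_i Num.sqrt (1 - t * w 0 i ^+ 2).

(* The rescaling by [shrink t w] restores the unit diagonal spoilt by [t *: (w^T *m w)]. *)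
Definition perturb (G0 : 'M[R]_n) w (t : R) : 'M[R]_n :=
  diag_mx (shrink t w) *m G0 *m diag_mx (shrink t w) + t *: (w^T *m w).

Lemma perturb_GN (G0 : 'M[R]_n) w t : h_GN G0 -> 0 <= t -> (forall i, t * w 0 i ^+ 2 <= 1) ->
  h_GN (perturb G0 w t).
Proof.
move=> [psd0 d0] t_ge0 tw_le1; split.
  have := psd_gram w^T; rewrite trmxK => psd_ww.
  rewrite /perturb -[X in X + _]scale1r.
  by apply: psd_combination => //; exact: psd_diag_conj.
move=> i; rewrite /perturb mul_mx_diag mul_diag_mx !mxE big_ord1 !mxE d0 mulr1.
by rewrite -expr2 sqr_sqrtr ?subr_ge0 //; ring.
Qed.

Lemma tr_mul_delta A i j : \tr (A *m delta_mx i j) = A j i.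
Proof.
rewrite /mxtrace (bigD1 j) //= big1 ?addr0 => [|k neq_kj].
  rewrite mxE (bigD1 i) //= big1 ?addr0 => [|l neq_li]; first by rewrite mxE !eqxx mulr1.
  by rewrite mxE (negbTE neq_li) mulr0.
by rewrite mxE big1 // => l _; rewrite mxE (negbTE neq_kj) andbF mulr0.
Qed.

Lemma tr_mul_diag A d : \tr (A *m diag_mx d) = \sum_i A i i * d 0 i.
Proof. by rewrite mul_mx_diag; apply: eq_bigr => i _; rewrite mxE. Qed.

Lemma tr_mul_diag_conj A (G0 : 'M[R]_n) d : A^T = A -> G0^T = G0 -> (forall i, (A *m G0) i i = 0) ->
  \tr (A *m ((1%:M + diag_mx d) *m G0 *m (1%:M + diag_mx d))) =
  \tr (A *m diag_mx d *m G0 *m diag_mx d).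
Proof.
move=> sA sG0 AG0_diag.
have tr_AG0 : \tr (A *m G0) = 0 by rewrite /mxtrace big1.
have tr_AG0D : \tr (A *m G0 *m diag_mx d) = 0.
  by rewrite tr_mul_diag big1 // => i _; rewrite AG0_diag mul0r.
have tr_ADG0 : \tr (A *m diag_mx d *m G0) = 0.
  rewrite -mxtrace_tr !trmx_mul sA sG0 tr_diag_mx mulmxA mxtrace_mulC mulmxA.
  exact: tr_AG0D.
rewrite !mulmxDl !mulmxDr !mul1mx !mulmx1 !mxtraceD !mulmxA tr_AG0 tr_AG0D tr_ADG0.
by rewrite !add0r.
Qed.

Lemma tr_mul_diag_conj_le A (G0 : 'M[R]_n) d (m : R) : (forall i, `|d 0 i| <= m) ->
  \tr (A *m diag_mx d *m G0 *m diag_mx d) <= (\sum_i \sum_j `|A i j * G0 j i|) * m ^+ 2.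
Proof.
move=> d_le; rewrite /mxtrace mulr_suml; apply: ler_sum => i _.
rewrite mul_mx_diag mxE mxE !mulr_suml; apply: ler_sum => j _.
rewrite mul_mx_diag mxE; apply: le_trans (ler_norm _) _.
rewrite !normrM.
have -> : `|A i j| * `|d 0 j| * `|G0 j i| * `|d 0 i| =
          `|A i j| * `|G0 j i| * (`|d 0 i| * `|d 0 j|) by ring.
by rewrite ler_wpM2l ?mulr_ge0 // expr2 ler_pM.
Qed.

Lemma psd_of_cone A (G0 : 'M[R]_n) : A^T = A -> h_GN G0 -> (forall i, (A *m G0) i i = 0) ->
  (forall G, h_GN G -> 0 <= \tr (A *m G)) -> h_psd A.
Proof.
move=> sA GN0 AG0_diag A_ge0; split=> // w.
set M2 := (w *m w^T) 0 0; have M2_ge0 : 0 <= M2 by exact: gram_diag_ge0.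
set K := \sum_i \sum_j `|A i j * G0 j i|.
have K_ge0 : 0 <= K by do 2!(apply: sumr_ge0 => ? _).
apply: (@near0_quadratic_ge0_lin_ge0 _ _ (K * M2 ^+ 2) (M2 + 1)^-1).
- by rewrite mulr_ge0 ?exprn_ge0.
- by rewrite invr_gt0; lra.
move=> t t_gt0; rewrite -[(M2 + 1)^-1]div1r ler_pdivlMr; last lra.
move=> t_small; have t_ge0 := ltW t_gt0; have tM2 : t * M2 <= 1 by nra.
have tw i : 0 <= t * w 0 i ^+ 2 <= 1.
  rewrite mulr_ge0 ?sqr_ge0 //=; apply: le_trans tM2.
  by rewrite ler_wpM2l ?sqr_le_dot_self.
have d_le i : `|(shrink t w - const_mx 1) 0 i| <= t * M2.
  rewrite !mxE; apply: le_trans (sqrt1B_dist (tw i)) _.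
  by rewrite ler_wpM2l ?sqr_le_dot_self.
(* Along [perturb G0 w], the cone inequality reads [0 <= t * qform A w + O(t ^+ 2)]. *)
have := A_ge0 _ (perturb_GN GN0 t_ge0 (fun i => (andP (tw i)).2)).
rewrite /perturb mulmxDr mxtraceD -scalemxAr mxtraceZ -[shrink t w](subrKC (const_mx 1)).
rewrite raddfD /= diag_const_mx tr_mul_diag_conj ?GN0.1.1 //.
have -> : \tr (A *m (w^T *m w)) = qform A w by rewrite mulmxA mxtrace_mulC mulmxA /mxtrace big_ord1.
have := tr_mul_diag_conj_le A G0 d_le; rewrite -/K.
have -> : K * (t * M2) ^+ 2 = K * M2 ^+ 2 * t ^+ 2 by ring.
rewrite -/(qform A w); lra.
Qed.

End TangentCone.

Section GroundStates.
Variable R : realType.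
Variable N : nat.
Implicit Types (A S : 'M[R]_N).

Lemma lagrange_mul_gram M J k (s : 'M[R]_(N, M)) :
  h_lagrange J k s -> h_Jk J k *m h_gram s = 0.
Proof. by rewrite /h_lagrange /h_gram mulmxA => ->; rewrite mul0mx. Qed.

Lemma Jk_offdiag_diag A : A = h_Jk (h_offdiag A) (h_diag_of A).
Proof.
apply/matrixP => i j; rewrite !mxE.
by case: (eqVneq i j) => [->|_]; rewrite ?mulr1n ?mulr0n ?add0r ?addr0 // mxE.
Qed.

Lemma gram_diag M (s : 'M[R]_(N, M)) i : h_configuration s -> h_gram s i i = 1.
Proof. by move=> conf_s; rewrite -(conf_s i) mxE; apply: eq_bigr => j _; rewrite mxE expr2. Qed.

Lemma energy_offdiag M A (s : 'M[R]_(N, M)) : h_configuration s ->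
  h_energy (h_offdiag A) s = \tr (A *m h_gram s) - \tr A.
Proof.
move=> conf_s; rewrite /h_energy {2}[A]Jk_offdiag_diag /h_Jk mulmxDl mxtraceD.
suff -> : \tr (diag_mx (h_diag_of A) *m h_gram s) = \tr A by rewrite addrK.
rewrite mxtrace_mulC tr_mul_diag; apply: eq_bigr => i _.
by rewrite (gram_diag i conf_s) mul1r mxE.
Qed.

Lemma orthC_mul_config M S A (s : 'M[R]_(N, M)) :
  (A <= h_orthC S)%MS -> (h_gram s <= S)%MS -> A *m s = 0.
Proof.
move=> /sub_kermxP AS /submxP[D eD]; apply: gram_eq0.
have -> : A *m s *m (A *m s)^T = A *m (h_gram s)^T *m A^T.
  by rewrite /h_gram !trmx_mul trmxK !mulmxA.
by rewrite eD trmx_mul mulmxA AS !mul0mx.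
Qed.

Lemma psd_orthC_ground_state M S A (s : 'M[R]_(N, M)) :
  h_psd A -> (A <= h_orthC S)%MS -> h_configuration s -> (h_gram s <= S)%MS ->
  h_ground_state (h_offdiag A) s /\ h_lagrange (h_offdiag A) (h_diag_of A) s.
Proof.
move=> psdA AS conf_s sS; have As0 := orthC_mul_config AS sS.
split; last by rewrite /h_lagrange -Jk_offdiag_diag.
split=> // M' s' conf_s'.
rewrite !energy_offdiag // /h_gram mulmxA As0 mul0mx mxtrace0 lerB //.
exact: psd_tr_gram_ge0.
Qed.

End GroundStates.

Section FaceCone.
Variable R : realType.
Variable N : nat.
Implicit Types (A B C G S : 'M[R]_N).

Lemma psd_tr_mul_ge0 A G : h_psd A -> h_psd G -> 0 <= \tr (A *m G).
Proof.
by move=> psdA /psd_gram_factor[r [X [-> _]]]; exact: psd_tr_gram_ge0.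
Qed.

Lemma psd_tr_mul_eq0 A G : h_psd A -> h_psd G -> \tr (A *m G) = 0 -> A *m G = 0.
Proof.
move=> psdA /psd_gram_factor[r [X [-> _]]] /(psd_tr_gram_eq0 psdA) AX0.
by rewrite mulmxA AX0 mul0mx.
Qed.

Lemma sub_orthCP {S A} : S^T = S -> reflect (A *m S = 0) (A <= h_orthC S)%MS.
Proof. by move=> sS; rewrite /h_orthC sS; exact: sub_kermxP. Qed.

Lemma GN_completely_elliptic (G0 : 'M[R]_N) : h_GN G0 -> h_completely_elliptic G0.
Proof.
move=> [psd0 d0]; have [X [eG0 freeX]] := psd_gram_factor_rank psd0.
have rkX : \rank X = \rank G0 by rewrite -mxrank_gram -eG0.
exists X; split; last split=> //.
  have G0X : (X *m X^T <= X^T)%MS := submxMl _ _; rewrite -eG0 in G0X.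
  by rewrite -(mxrank_leqif_sup G0X).2 mxrank_tr rkX.
move=> i; have dX : (X *m X^T) i i = 1 by rewrite -eG0.
by rewrite -dX mxE; apply: eq_bigr => j _; rewrite mxE expr2.
Qed.

Lemma fA_coneC (G0 : 'M[R]_N) A : h_GN G0 -> h_psd A -> (A <= h_orthC G0)%MS ->
  h_coneC G0 (h_fA A).
Proof.
move=> [psd0 _] psdA /(sub_orthCP psd0.1) AG0; split.
  by move=> a X Y _ _; rewrite /h_fA mulmxDr -scalemxAr mxtraceD mxtraceZ.
by move=> G [psdG _]; rewrite /h_fA mulmxBr AG0 subr0; exact: psd_tr_mul_ge0.
Qed.

Lemma sym_annihilator_eq0 (G0 : 'M[R]_N) C : (forall i, G0 i i = 1) -> C^T = C ->
  C *m G0 = 0 -> (forall X, h_zero_diag_sym X -> \tr (C *m X) = 0) -> C = 0.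
Proof.
move=> d0 sC CG0 C_perp.
have off i j : i != j -> C i j = 0.
  move=> neq_ij; have := C_perp _ (zero_diag_sym_delta R neq_ij).
  rewrite mulmxDr mxtraceD !tr_mul_delta.
  have -> : C j i = C i j by rewrite -{1}sC mxE.
  lra.
apply/matrixP => i j; rewrite mxE; case: (eqVneq i j) => [<-|/off ->] //.
have := congr1 (fun M : 'M[R]_N => M i i) CG0; rewrite !mxE (bigD1 i) //= d0 mulr1 big1 ?addr0 //.
by move=> k neq_ki; rewrite (off i k) ?mul0r // eq_sym.
Qed.

Lemma fA_inj_orthC (G0 : 'M[R]_N) A B : h_GN G0 ->
  h_psd A -> (A <= h_orthC G0)%MS -> h_psd B -> (B <= h_orthC G0)%MS ->
  (forall X, h_zero_diag_sym X -> h_fA A X = h_fA B X) -> A = B.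
Proof.
move=> [[sG0 _] d0] [sA _] /(sub_orthCP sG0) AG0 [sB _] /(sub_orthCP sG0) BG0 fAB.
apply/eqP; rewrite -subr_eq0; apply/eqP/(sym_annihilator_eq0 d0).
- by rewrite linearB /= sA sB.
- by rewrite mulmxBl AG0 BG0 subrr.
- by move=> X LX; rewrite mulmxBl raddfB /= -!/(h_fA _ X) (fAB X LX) subrr.
Qed.

Lemma cone_functional_repr (G0 : 'M[R]_N) l : h_GN G0 -> h_coneC G0 l ->
  exists2 A, h_psd A /\ (A <= h_orthC G0)%MS &
    forall X, h_zero_diag_sym X -> h_fA A X = l X.
Proof.
move=> GN0 [lin_l l_ge0]; have [[sG0 _] d0] := GN0.
(* The diagonal is invisible to [l] and is chosen to make [A *m G0] zero-diagonal. *)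
pose B := functional_mx l; pose A := B + diag_mx (\row_i (- (B *m G0) i i)).
have sA : A^T = A.
  rewrite /A linearD /= tr_diag_mx; congr (_ + _).
  by apply/matrixP => i j; rewrite !mxE eq_sym; case: eqP => // _; rewrite addrC.
have AG0_diag i : (A *m G0) i i = 0 by rewrite mulmxDl mul_diag_mx !mxE d0 mulr1 addrN.
have fA X : h_zero_diag_sym X -> h_fA A X = l X.
  move=> LX; rewrite /h_fA mulmxDl mxtraceD [X in _ + X]mxtrace_mulC tr_mul_diag.
  by rewrite big1 ?addr0 -?linear_on_LN_tr // => i _; rewrite LX.2 mul0r.
have trAG0 : \tr (A *m G0) = 0 by rewrite /mxtrace big1.
have psdA : h_psd A.
  apply: (psd_of_cone sA GN0 AG0_diag) => G GNG.
  have := l_ge0 G GNG; rewrite -fA; last exact: GN_subr_zero_diag_sym GNG GN0.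
  by rewrite /h_fA mulmxBr raddfB /= trAG0 subr0.
exists A; last exact: fA.
by split=> //; apply/(sub_orthCP sG0)/psd_tr_mul_eq0 => //; exact: GN0.1.
Qed.

End FaceCone.

Theorem theorem3 (R : realType) (N : nat) (J : 'M[R]_N) :
  h_symmetric_mx J -> (forall i, J i i = 0) ->
  (* (i) *)
  (forall (M : nat) (s : 'M[R]_(N, M)) (k : 'rV[R]_N),
     h_ground_state J s -> h_lagrange J k s -> h_Jk J k *m h_gram s = 0)
  /\
  (* (ii) *)
  (forall S : 'M[R]_N,
     h_completely_elliptic S -> h_nontrivial_face (@h_GN R N) (h_FS S) -> closed (h_FS S) ->
     forall A : 'M[R]_N, h_psd A -> (A :=: h_orthC S)%MS ->
       A = h_Jk (h_offdiag A) (h_diag_of A) /\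
       forall (M : nat) (s : 'M[R]_(N, M)),
         h_configuration s -> h_FS S (h_gram s) ->
         h_ground_state (h_offdiag A) s /\ h_lagrange (h_offdiag A) (h_diag_of A) s)
  /\
  (* (iii) *)
  (forall (G0 : 'M[R]_N) (F0 : set 'M[R]_N),
     @h_GN R N G0 -> (\rank G0 < N)%N ->
     h_face_generated (@h_GN R N) G0 F0 -> closed F0 ->
     exists S : 'M[R]_N,
       h_completely_elliptic S /\ F0 = h_FS S /\
       (* f maps the cone into C(G0) *)
       (forall A, h_psd A -> (A <= h_orthC S)%MS -> h_coneC G0 (h_fA A)) /\
       (* injective (functionals compared on L_N) *)
       (forall A B, h_psd A -> (A <= h_orthC S)%MS -> h_psd B -> (B <= h_orthC S)%MS ->
          (forall X, h_zero_diag_sym X -> h_fA A X = h_fA B X) -> A = B) /\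
       (* surjective onto C(G0) *)
       (forall l, h_coneC G0 l -> exists2 A, h_psd A /\ (A <= h_orthC S)%MS &
          forall X, h_zero_diag_sym X -> h_fA A X = l X)).
Proof.
move=> _ _; split; first by move=> M s k _; exact: lagrange_mul_gram.
split.
  move=> S _ _ _ A psdA eqA; split; first exact: Jk_offdiag_diag.
  by move=> M s conf_s [_ sS]; apply: psd_orthC_ground_state; rewrite ?eqA.
move=> G0 F0 GN0 _ genF0 _; exists G0.
split; first exact: GN_completely_elliptic.
split; first exact: face_generated_FS.
split; first by move=> A; exact: fA_coneC.
split; first by move=> A B; exact: fA_inj_orthC.
by move=> l; exact: cone_functional_repr.
Qed.
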